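(* Let $u\in\Sigma^*$, $v\in\Sigma^+$. Let $(x_1,y_1)$ be the shortest form of $(u,v)$ and $n=|y_1|$. For $1\leq k<n$ let $(x_{k+1},y_{k+1})$ be the shortest form of the decomposition $(x_ky_k[1],\ y_k[2\cdots n]\,y_k[1])$. Let $\mathcal{D}_{u\$v}$ be a finite automaton over $\Sigma\cup\{\$\}$ (with $\$\notin\Sigma$) recognizing $\bigcup_{k=1}^{n}x_ky_k^*\,\$\,y_k^+$. Then $L(\mathcal{D}_{u\$v})=\{u'\$v'\mid u'\in\Sigma^*,\ v'\in\Sigma^+,\ u'v'^\omega=uv^\omega\}$.
   Context: A decomposition of an $\omega$-word $w$ is a pair $(u,v)$ with $u\in\Sigma^*$, $v\in\Sigma^+$ and $w=uv^\omega$. For a word $z$, $z[i]$ is its $i$-th letter and $z[i\cdots k]$ the subword from position $i$ to $k$ inclusive. Write $r\unlhd v$ if $r$ is a nonempty prefix of $v$, and $r\lhd v$ if moreover $r\neq v$. A smallest period of $(u,v)$ is a word $r$ with $r\unlhd v$, $r^\omega=v^\omega$, and $t^\omega\neq r^\omega$ for every $t\lhd r$. If $y$ is the smallest period of $(u,v)$, the shortest form of $(u,v)$ is the pair $(x,y)$ where $u=xy^i$, $v=y^j$ for some $i\geq0,j\geq1$ and $x$ is the shortest word with $u\in xy^*$. *)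

From mathcomp Require Import all_boot.
Set Implicit Arguments. Unset Strict Implicit. Unset Printing Implicit Defensive.

Section Words.
Variable T : finType.

(* omega-words are represented as functions nat -> option T
   (the option is only a device to avoid needing a default letter;
   all omega-words below take values Some _ only) *)
Definition oword := nat -> option T.

Definition oweq (a b : oword) : Prop := forall i, a i = b i.

Definition wpow (z : seq T) (i : nat) : seq T := flatten (nseq i z).

(* the omega-word u v^omega (for nonempty v); positions start at 0 *)
Definition uvw (u v : seq T) : oword := fun i =>
  if i < size u then nth None (map Some u) i
  else nth None (map Some v) ((i - size u) %% size v).

Definition omega (r : seq T) : oword := uvw [::] r.

Definition nprefix (r v : seq T) : bool := (0 < size r) && prefix r v.
Definition pprefix (r v : seq T) : bool := nprefix r v && (r != v).

Definition smallest_period (u v r : seq T) : Prop :=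
  [/\ nprefix r v, oweq (omega r) (omega v)
    & forall t, pprefix t r -> ~ oweq (omega t) (omega r)].

Definition shortest_form (u v x y : seq T) : Prop :=
  [/\ smallest_period u v y,
      (exists i, u = x ++ wpow y i),
      (exists2 j, 1 <= j & v = wpow y j)
    & forall x', (exists i, u = x' ++ wpow y i) -> size x <= size x'].

End Words.

Record dfa (A : Type) := DFA {
  dfa_state : finType;
  dfa_start : dfa_state;
  dfa_final : pred dfa_state;
  dfa_trans : dfa_state -> A -> dfa_state }.

Definition dfa_accept (A : Type) (D : dfa A) (w : seq A) : bool :=
  @dfa_final A D (foldl (@dfa_trans A D) (@dfa_start A D) w).

(* Alphabet Sigma ∪ {$}: letters of Sigma are [Some a], and $ is [None]. *)
Definition dollar_word (T : finType) (u v : seq T) : seq (option T) :=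
  map Some u ++ None :: map Some v.

From mathcomp Require Import all_boot zify.
Set Implicit Arguments. Unset Strict Implicit. Unset Printing Implicit Defensive.

(** Let W = u v^omega. If (x, y) is the shortest form of some decomposition of
    W, then y is primitive, so every eventual period of W is a multiple of |y|:
    two periods combine into their gcd, and a period shorter than |y| would
    give a proper prefix of y with the same omega-power. Hence all y_k have
    length n, and x_k is the shortest prefix in its residue class mod n after
    which W is n-periodic. Each rotation step shifts |x_k| by one mod n, so the
    x_k cover all residues. For any decomposition (u', v') of W, |v'| is a
    multiple of n and |u'| = |x_k| mod n for some k; minimality of x_k then
    forces u' = x_k y_k^i and v' = y_k^j. *)

Section Periodicity.
Variables (A : Type) (f : nat -> A).

Definition periodic_from (a p : nat) := forall i, a <= i -> f (i + p) = f i.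

Lemma periodic_fromM a p c i : periodic_from a p -> a <= i -> f (i + c * p) = f i.
Proof.
move=> Pp ai; elim: c => [|c IH]; first by rewrite addn0.
by rewrite mulSn addnCA addnC Pp ?IH // (leq_trans ai (leq_addr _ _)).
Qed.

Lemma periodic_from_le a b p : periodic_from a p -> a <= b -> periodic_from b p.
Proof. by move=> Pp ab i bi; apply: Pp; apply: leq_trans bi. Qed.

Lemma periodic_fromB a p q :
  periodic_from a p -> periodic_from a q -> p < q -> periodic_from a (q - p).
Proof.
move=> Pp Pq pq i ai.
rewrite -(Pp (i + (q - p))); last exact: leq_trans ai (leq_addr _ _).
by rewrite -addnA subnK ?Pq // ltnW.
Qed.

Lemma periodic_from_gcd a p q : 0 < p -> 0 < q ->
  periodic_from a p -> periodic_from a q -> periodic_from a (gcdn p q).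
Proof.
move: {2}(p + q) (leqnn (p + q)) => s; elim: s p q => [|s IH] p q hs hp hq Pp Pq.
  by move: hs hp; rewrite leqn0 addn_eq0 => /andP[/eqP-> _].
case: (ltngtP p q) => [pq|qp|->]; last by rewrite gcdnn.
- rewrite -(subnKC (ltnW pq)) gcdnDl.
  apply: IH => //; [lia | by rewrite subn_gt0 | exact: periodic_fromB].
- rewrite gcdnC -(subnKC (ltnW qp)) gcdnDl.
  apply: IH => //; [lia | by rewrite subn_gt0 | exact: periodic_fromB].
Qed.

Lemma periodic_from_lower a b p q :
  0 < p -> periodic_from a p -> periodic_from b q -> periodic_from a q.
Proof.
move=> hp Pp Pq i ai.
have bi : b <= i + b * p by rewrite (leq_trans _ (leq_addl _ _)) // leq_pmulr.
rewrite -(periodic_fromM b Pp (leq_trans ai (leq_addr q i))) addnAC Pq //.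
exact: (periodic_fromM b Pp ai).
Qed.

End Periodicity.

Section Words.
Variable T : finType.
Implicit Types (x y : seq T).

Lemma uvw_prefix x y i : i < size x -> uvw x y i = nth None (map Some x) i.
Proof. by rewrite /uvw => ->. Qed.

Lemma uvw_suffix x y i : uvw x y (size x + i) = omega y i.
Proof. by rewrite /omega /uvw /= ltnNge leq_addr addKn subn0. Qed.

Lemma omega_mod y i : omega y i = omega y (i %% size y).
Proof. by rewrite /omega /uvw /= !subn0 modn_mod. Qed.

Lemma omega_small y i : i < size y -> omega y i = nth None (map Some y) i.
Proof. by move=> hi; rewrite /omega /uvw /= subn0 modn_small. Qed.

Lemma omega_periodic y : periodic_from (omega y) 0 (size y).
Proof. by move=> i _; rewrite omega_mod modnDr -omega_mod. Qed.

Lemma omega_rot1 y i : omega (rot 1 y) i = omega y i.+1.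
Proof.
case: y => [|a s]; first by rewrite /omega /uvw /= !nth_nil.
rewrite rot1_cons omega_mod [RHS]omega_mod size_rcons /= -[i.+1]addn1 -modnDml addn1.
have : i %% (size s).+1 <= size s by rewrite -ltnS ltn_pmod.
move: (i %% _) => r; rewrite leq_eqVlt => /predU1P[->|lt_rs].
  by rewrite modnn !omega_small ?size_rcons // map_rcons nth_rcons size_map ltnn eqxx.
have le_rs := ltnW lt_rs.
rewrite modn_small // !omega_small ?size_rcons //=.
by rewrite map_rcons nth_rcons size_map lt_rs.
Qed.

Lemma size_wpow y c : size (wpow y c) = c * size y.
Proof. by elim: c => // c IH; rewrite /wpow /= size_cat -/(wpow y c) IH mulSn. Qed.

Lemma nth_wpow y c i : i < c * size y ->
  nth None (map Some (wpow y c)) i = nth None (map Some y) (i %% size y).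
Proof.
elim: c i => [|c IH] i; first by rewrite mul0n.
rewrite mulSn /wpow /= -/(wpow y c) map_cat nth_cat size_map => hi.
case: ltnP => h; first by rewrite modn_small.
rewrite IH; last by lia.
by rewrite -{2}(subnK h) modnDr.
Qed.

Lemma uvw_wpow x y i j : 0 < size y -> 0 < j ->
  uvw (x ++ wpow y i) (wpow y j) =1 uvw x y.
Proof.
move=> hy hj k; rewrite /uvw size_cat size_wpow map_cat nth_cat size_map.
case: (ltnP k (size x)) => h1; first by rewrite ltn_addr.
case: ltnP => h2; first by rewrite nth_wpow //; lia.
rewrite nth_wpow; last by rewrite size_wpow ltn_pmod // muln_gt0 hj.
rewrite size_wpow (modn_dvdm _ (dvdn_mull _ (dvdnn _))).
have -> : k - size x = (k - (size x + i * size y)) + i * size y by lia.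
by rewrite [in RHS]addnC modnMDl.
Qed.

Lemma uvw_rot1 x y : 0 < size y -> uvw (x ++ take 1 y) (rot 1 y) =1 uvw x y.
Proof.
case: y => // a s _ k; rewrite /= take0.
have hsz : size (x ++ [:: a]) = (size x).+1 by rewrite size_cat addn1.
case: (ltnP k (size x).+1) => hk.
  rewrite uvw_prefix ?hsz // map_cat nth_cat size_map.
  move: hk; rewrite ltnS leq_eqVlt => /predU1P[->|hlt]; last by rewrite hlt uvw_prefix.
  by rewrite ltnn subnn -[size x]addn0 uvw_suffix.
by rewrite -(subnKC hk) -hsz uvw_suffix omega_rot1 hsz addSnnS uvw_suffix.
Qed.

End Words.

Section Factors.
Variable T : finType.
Implicit Types (y : seq T) (W : oword T).

Definition factor W a l : seq (option T) := map W (iota a l).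

Lemma size_factor W a l : size (factor W a l) = l.
Proof. by rewrite size_map size_iota. Qed.

Lemma factor_cat W a l1 l2 : factor W a (l1 + l2) = factor W a l1 ++ factor W (a + l1) l2.
Proof. by rewrite /factor iotaD map_cat. Qed.

Lemma factor_shift W a p b c l : periodic_from W a p -> a <= b ->
  factor W (b + c * p) l = factor W b l.
Proof.
move=> Pp ab; rewrite /factor addnC iotaDl -map_comp; apply/eq_in_map => i.
rewrite mem_iota => /andP[bi _] /=.
by rewrite addnC (periodic_fromM c Pp (leq_trans ab bi)).
Qed.

Lemma factor_eq_mod W a p m m' l : periodic_from W a p -> a <= m -> a <= m' ->
  m = m' %[mod p] -> factor W m l = factor W m' l.
Proof.
wlog le_mm' : m m' / m <= m' => [hwlog Pp am am' e|Pp am _ /esym e].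
  by case: (leqP m m') => [|/ltnW] h; [|symmetry]; apply: hwlog.
move/eqP: e; rewrite eqn_mod_dvd // => /dvdnP[c e].
by rewrite -(subnKC le_mm') e (factor_shift _ _ Pp am).
Qed.

Lemma factor_wpow W a y c : periodic_from W a (size y) ->
  factor W a (size y) = map Some y -> factor W a (c * size y) = map Some (wpow y c).
Proof.
move=> Py hy; elim: c => // c IH.
rewrite mulSn factor_cat /wpow /= map_cat -/(wpow y c) hy -IH.
by rewrite -[in RHS](factor_shift 1 _ Py (leqnn a)) mul1n.
Qed.

End Factors.

Section Primitivity.
Variable T : finType.
Implicit Types (x y : seq T) (W : oword T).

Section UltimatelyPeriodic.
Variables (x y : seq T) (W : oword T).
Hypothesis xyW : oweq (uvw x y) W.

Lemma oweq_uvw_suffix i : W (size x + i) = omega y i.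
Proof. by rewrite -xyW uvw_suffix. Qed.

Lemma oweq_uvw_periodic : periodic_from W (size x) (size y).
Proof.
move=> i hi; rewrite -(subnKC hi) -addnA !oweq_uvw_suffix.
exact: omega_periodic.
Qed.

Lemma oweq_uvw_omega_periodic a p :
  periodic_from W a p -> periodic_from (omega y) (a - size x) p.
Proof. by move=> Pp i hi; rewrite -!oweq_uvw_suffix addnA Pp //; lia. Qed.

Lemma oweq_uvw_factor_prefix : factor W 0 (size x) = map Some x.
Proof.
apply: (@eq_from_nth _ None); first by rewrite size_factor size_map.
move=> i; rewrite size_factor => hi.
by rewrite (nth_map 0) ?size_iota // nth_iota // -xyW uvw_prefix.
Qed.

Lemma oweq_uvw_factor m : size x <= m -> m = size x %[mod size y] ->
  factor W m (size y) = map Some y.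
Proof.
move=> xm e; rewrite (factor_eq_mod _ oweq_uvw_periodic xm (leqnn _) e).
apply: (@eq_from_nth _ None); first by rewrite size_factor size_map.
move=> i; rewrite size_factor => hi.
by rewrite (nth_map 0) ?size_iota // nth_iota // oweq_uvw_suffix omega_small.
Qed.

Lemma oweq_uvw_factor_wpow m c : size x <= m -> m = size x %[mod size y] ->
  factor W m (c * size y) = map Some (wpow y c).
Proof.
move=> xm e; apply: factor_wpow (oweq_uvw_factor xm e).
exact: periodic_from_le oweq_uvw_periodic xm.
Qed.

End UltimatelyPeriodic.

Definition primitive y := forall t, pprefix t y -> ~ oweq (omega t) (omega y).

Lemma omega_take_period y g : 0 < g < size y ->
  periodic_from (omega y) 0 g -> oweq (omega (take g y)) (omega y).
Proof.
move=> /andP[g0 gy] Pg i.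
have sz : size (take g y) = g by rewrite size_take gy.
have ig : i %% g < g by rewrite ltn_pmod.
rewrite omega_mod sz omega_small ?sz // map_take nth_take //.
rewrite -omega_small ?(ltn_trans ig gy) // {2}(divn_eq i g) addnC.
by rewrite (periodic_fromM _ Pg).
Qed.

Lemma primitive_period_dvd y a p : primitive y -> 0 < size y -> 0 < p ->
  periodic_from (omega y) a p -> size y %| p.
Proof.
move=> prim y0 p0 Pp; set g := gcdn (size y) p.
have g0 : 0 < g by rewrite gcdn_gt0 y0.
have Pg : periodic_from (omega y) 0 g.
  apply: (periodic_from_lower y0 (omega_periodic y)).
  exact: periodic_from_gcd y0 p0 (periodic_from_le (omega_periodic y) (leq0n a)) Pp.
have [gy|/negbTE gy] := eqVneq g (size y); first by rewrite -gy dvdn_gcdr.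
have lt_gy : g < size y by rewrite ltn_neqAle gy dvdn_leq ?dvdn_gcdl.
have g_range : 0 < g < size y by rewrite g0 lt_gy.
case: (prim (take g y)); last exact: omega_take_period g_range Pg.
rewrite /pprefix /nprefix size_take lt_gy g0 prefix_take /=.
by apply/eqP => /(congr1 size); rewrite size_take lt_gy => /eqP; rewrite gy.
Qed.

End Primitivity.

Section ShortestRepresentation.
Variable T : finType.
Implicit Types (x y : seq T) (W : oword T).

(* The part of "(x, y) is a shortest form" that depends only on the omega-word
   x y^omega: minimality of x is measured against every position where W
   becomes |y|-periodic, not only against the prefixes of one given u. *)
Definition shortest_rep W x y :=
  [/\ 0 < size y, primitive y, oweq (uvw x y) W
    & forall m, periodic_from W m (size y) -> m = size x %[mod size y] -> size x <= m].

Lemma shortest_rep_period_dvd W x y a p :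
  shortest_rep W x y -> 0 < p -> periodic_from W a p -> size y %| p.
Proof.
case=> y0 prim xyW _ p0 Pp.
exact: primitive_period_dvd prim y0 p0 (oweq_uvw_omega_periodic xyW Pp).
Qed.

Lemma shortest_rep_size W x y x' y' :
  shortest_rep W x y -> shortest_rep W x' y' -> size y = size y'.
Proof.
move=> rep rep'; have [y0 _ xyW _] := rep; have [y'0 _ xyW' _] := rep'.
apply/eqP; rewrite eqn_dvd.
by rewrite (shortest_rep_period_dvd rep y'0 (oweq_uvw_periodic xyW'))
           (shortest_rep_period_dvd rep' y0 (oweq_uvw_periodic xyW)).
Qed.

Lemma shortest_form_rep U V X Y W :
  shortest_form U V X Y -> oweq (uvw U V) W -> shortest_rep W X Y.
Proof.
case=> [[/andP[Y0 _] _ prim] [i eU] [j j0 eV] minX] UVW.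
have XYW : oweq (uvw X Y) W by move=> k; rewrite -(uvw_wpow X i Y0 j0) -eU -eV.
split=> // m Pm mX.
have sU : size U = size X + i * size Y by rewrite eU size_cat size_wpow.
have [Um|mU] := leqP (size U) m; first by rewrite (leq_trans _ Um) // sU leq_addr.
have UX : size U = size X %[mod size Y] by rewrite sU addnC modnMDl.
have /dvdnP[c Umc] : size Y %| size U - m.
  by rewrite -eqn_mod_dvd ?(ltnW mU) //; apply/eqP; rewrite UX.
have factor_m : factor W m (size Y) = map Some Y.
  rewrite (factor_eq_mod (size Y) Pm (leqnn m) (ltnW mU)); last by rewrite UX.
  by rewrite (oweq_uvw_factor XYW) // sU leq_addr.
rewrite -(size_takel (ltnW mU)); apply: minX; exists c; apply: (inj_map Some_inj).
rewrite map_cat map_take -(oweq_uvw_factor_prefix UVW).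
rewrite -(subnKC (ltnW mU)) Umc factor_cat add0n take_size_cat ?size_factor //.
by rewrite (factor_wpow _ Pm factor_m).
Qed.

Lemma shortest_rep_rot1 W X Y X' Y' : shortest_rep W X Y ->
  shortest_form (X ++ take 1 Y) (rot 1 Y) X' Y' ->
  [/\ shortest_rep W X' Y', size Y' = size Y & size X' = (size X).+1 %[mod size Y]].
Proof.
move=> rep sf; have [Y0 _ XYW _] := rep.
have rep' : shortest_rep W X' Y'.
  by apply: (shortest_form_rep sf) => k; rewrite uvw_rot1 // XYW.
have sY' := shortest_rep_size rep' rep; split=> //.
have [_ [i eU] _ _] := sf.
have take1 : size (take 1 Y) = 1 by rewrite size_takel.
by rewrite -addn1 -take1 -size_cat eU size_cat size_wpow sY' addnC modnMDl.
Qed.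

Lemma shortest_rep_decompose W X Y u' v' : shortest_rep W X Y ->
  oweq (uvw u' v') W -> 0 < size v' -> size u' = size X %[mod size Y] ->
  exists i j, [/\ 0 < j, u' = X ++ wpow Y i & v' = wpow Y j].
Proof.
move=> rep uvW v'0 u'X; have [Y0 _ XYW minX] := rep.
have Pv' := oweq_uvw_periodic uvW.
have PY : periodic_from W (size u') (size Y).
  exact: periodic_from_lower v'0 Pv' (oweq_uvw_periodic XYW).
have Xu' := minX _ PY u'X.
have /dvdnP[i su'] : size Y %| size u' - size X by rewrite -eqn_mod_dvd //; apply/eqP.
have /dvdnP[j sv'] := shortest_rep_period_dvd rep v'0 Pv'.
exists i, j; split; first by move: v'0; rewrite sv' muln_gt0 => /andP[].
  apply: (inj_map Some_inj); rewrite -(oweq_uvw_factor_prefix uvW) -(subnKC Xu') su'.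
  rewrite factor_cat map_cat add0n (oweq_uvw_factor_prefix XYW).
  by rewrite (oweq_uvw_factor_wpow XYW i (leqnn _) erefl).
apply: (inj_map Some_inj); rewrite -(oweq_uvw_factor uvW (leqnn _) erefl) sv'.
by rewrite (oweq_uvw_factor_wpow XYW j Xu' u'X).
Qed.

End ShortestRepresentation.

Lemma exists_residue a m n : 0 < n -> exists2 k, k < n & a + k = m %[mod n].
Proof.
move=> n0; exists ((m + (n - a %% n)) %% n); first by rewrite ltn_pmod.
have le_an : a %% n <= n by rewrite ltnW // ltn_pmod.
by rewrite modnDmr {1}(divn_eq a n) -addnA modnMDl addnCA subnKC // modnDr.
Qed.

Section Rotations.
Variables (T : finType) (W : oword T) (x y : nat -> seq T) (n : nat).
Hypotheses (rep1 : shortest_rep W (x 1) (y 1)) (en : n = size (y 1)).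
Hypothesis rot_step : forall k, 1 <= k < n ->
  shortest_form (x k ++ take 1 (y k)) (rot 1 (y k)) (x k.+1) (y k.+1).

Lemma rotations_rep k : 1 <= k <= n ->
  [/\ shortest_rep W (x k) (y k), size (y k) = n
    & size (x k) = size (x 1) + k.-1 %[mod n]].
Proof.
elim: k => // k IH /= kn; case: (posnP k) => [->|k0]; first by rewrite addn0 -en.
have k_range : 0 < k < n by rewrite k0.
have k_le : 0 < k <= n by rewrite k0 ltnW.
have [rep sy sx] := IH k_le.
have [rep' sy' sx'] := shortest_rep_rot1 rep (rot_step k_range).
rewrite sy in sy' sx'; split=> //.
rewrite sx' -[(size (x k)).+1]addn1 -modnDml sx modnDml.
by rewrite -addnA addn1 prednK.
Qed.

Lemma rotations_cover m : exists2 k, 1 <= k <= n & size (x k) = m %[mod n].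
Proof.
have [y0 _ _ _] := rep1; rewrite -en in y0.
have [k kn e] := exists_residue (size (x 1)) m y0.
have k_range : 0 < k.+1 <= n by [].
by exists k.+1 => //; have [_ _ ->] := rotations_rep k_range.
Qed.

End Rotations.

Theorem proposition2 (T : finType) (u v : seq T) (x y : nat -> seq T) (n : nat)
  (D : dfa (option T)) :
  0 < size v ->
  shortest_form u v (x 1) (y 1) ->
  n = size (y 1) ->
  (forall k, 1 <= k < n ->
     shortest_form (x k ++ take 1 (y k)) (drop 1 (y k) ++ take 1 (y k))
                   (x k.+1) (y k.+1)) ->
  (forall w, dfa_accept D w <->
     exists k, [/\ 1 <= k <= n &
       exists i j, 1 <= j /\ w = dollar_word (x k ++ wpow (y k) i) (wpow (y k) j)]) ->
  forall w, dfa_accept D w <->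
     exists u' v', [/\ 0 < size v', w = dollar_word u' v'
                     & oweq (uvw u' v') (uvw u v)].
Proof.
move=> _ sf1 en rot_step accD w; rewrite accD.
have rep1 := shortest_form_rep sf1 (fun _ => erefl).
split=> [[k [k_range [i [j [j0 ->]]]]]|[u' [v' [v'0 -> uvW]]]].
  have [[y0 _ xyW _] _ _] := rotations_rep rep1 en rot_step k_range.
  exists (x k ++ wpow (y k) i), (wpow (y k) j); split=> //.
    by rewrite size_wpow muln_gt0 j0.
  by move=> t; rewrite uvw_wpow // xyW.
have [k k_range xku'] := rotations_cover rep1 en rot_step (size u').
have [rep sy _] := rotations_rep rep1 en rot_step k_range.
have u'xk : size u' = size (x k) %[mod size (y k)] by rewrite sy xku'.
have [i [j [j0 -> ->]]] := shortest_rep_decompose rep uvW v'0 u'xk.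
by exists k; split=> //; exists i, j.
Qed.
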